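(* Let $P$ and $U$ be finite sets of points in $\mathbb{R}^d$ with $|P|=n_{\mathrm p}$, $|U|=n_{\mathrm u}$, let $\pi\in(0,1)$, $w_{\mathrm p}=\pi/n_{\mathrm p}$, $w_{\mathrm u}=1/n_{\mathrm u}$, and let $P'\subseteq P$, $U'\subseteq U$, not both empty. Let $W_{\mathrm p}=|P'|w_{\mathrm p}$ and $W_{\mathrm n}=|U'|w_{\mathrm u}-|P'|w_{\mathrm p}$. Let $\ell(v,y)=1/(1+\exp(vy))$ be the sigmoid loss and $$\hat R_{\mathrm{uPU}}(v;P',U')=\sum_{\mathbf{x}\in P'}w_{\mathrm p}\ell(v,+1)-\sum_{\mathbf{x}\in P'}w_{\mathrm p}\ell(v,-1)+\sum_{\mathbf{x}\in U'}w_{\mathrm u}\ell(v,-1).$$ Then $$\inf_{v\in\mathbb{R}}\hat R_{\mathrm{uPU}}(v;P',U')=\min\{W_{\mathrm p},W_{\mathrm n}\}.$$ *)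

From HB Require Import structures.
From mathcomp Require Import all_boot all_order all_algebra.
From mathcomp Require Import finmap.
From mathcomp Require Import all_classical all_reals all_analysis.
Set Implicit Arguments. Unset Strict Implicit. Unset Printing Implicit Defensive.
Import Order.TTheory GRing.Theory Num.Theory.
Local Open Scope ring_scope.

Definition sigmoid_loss (R : realType) (v y : R) : R := 1 / (1 + expR (v * y)).

Definition R_uPU (R : realType) (d : nat) (wp wu : R)
    (P' U' : {fset 'rV[R]_d}) (v : R) : R :=
  \sum_(x <- P') wp * sigmoid_loss v 1
  - \sum_(x <- P') wp * sigmoid_loss v (-1)
  + \sum_(x <- U') wu * sigmoid_loss v (-1).

From HB Require Import structures.
From mathcomp Require Import all_boot all_order all_algebra.
From mathcomp Require Import finmap.
From mathcomp Require Import all_classical all_reals all_analysis.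
From mathcomp Require Import ring lra.
Import Order.TTheory GRing.Theory Num.Theory.
Local Open Scope ring_scope.
Local Open Scope classical_set_scope.

(* Since l(v,-1) = 1 - l(v,+1), the risk depends on v only through s = l(v,+1)
   and equals the convex combination (1 - s) W_n + s W_p.  As v ranges over the
   reals, s ranges over exactly the open interval (0,1), so the infimum is the
   smaller endpoint value min(W_p, W_n), approached but not attained. *)

Section OpenSegment.
Context {R : realType}.

Definition open_segment (a b : R) : set R := [set (1 - t) * a + t * b | t in `]0, 1[].

Lemma open_segmentC (a b : R) : open_segment a b = open_segment b a.
Proof.
suff sub x y : open_segment x y `<=` open_segment y x by apply/seteqP; split.
move=> z [t]; rewrite /= in_itv /= => /andP[t0 t1] <-; exists (1 - t); last by ring.
by rewrite /= in_itv /=; apply/andP; split; lra.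
Qed.

Lemma exists_itv01_mul_le (c e : R) : 0 < e -> exists2 t, `]0, 1[ t & t * c <= e.
Proof.
move=> e0; have c0 := normr_ge0 c; have cc := ler_norm c.
have den0 : 0 < `|c| + 2 * e by lra.
(* the summand [2 * e] keeps the witness below 1/2, also when c = 0 *)
exists (e / (`|c| + 2 * e)).
  by rewrite /= in_itv /= divr_gt0 //= ltr_pdivrMr // mul1r; lra.
rewrite mulrAC ler_pdivrMr //; nra.
Qed.

Lemma open_segment_lbound (a b : R) : lbound (open_segment a b) (Num.min a b).
Proof.
move=> z [t]; rewrite /= in_itv /= => /andP[t0 t1] <-.
by rewrite ge_min; case: leP => ab /=; nra.
Qed.

Lemma inf_open_segment_le (a b : R) : inf (open_segment a b) <= a.
Proof.
apply/ler_addgt0Pr => e e0.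
have [t t01 tba] := exists_itv01_mul_le (b - a) _ e0.
have lbS : has_lbound (open_segment a b) by exists (Num.min a b); exact: open_segment_lbound.
by apply: le_trans (ge_inf lbS (ex_intro2 _ _ t t01 erefl)) _; lra.
Qed.

Lemma inf_open_segment (a b : R) : inf (open_segment a b) = Num.min a b.
Proof.
have le_a := inf_open_segment_le a b.
have le_b := inf_open_segment_le b a; rewrite open_segmentC in le_b.
apply/eqP; rewrite eq_le le_min le_a le_b /=.
apply: lb_le_inf; last exact: open_segment_lbound.
by exists ((1 - 2^-1) * a + 2^-1 * b), 2^-1; rewrite //= in_itv /=; apply/andP; split; lra.
Qed.

End OpenSegment.

Section SigmoidLoss.
Context {R : realType}.

Lemma sigmoid_lossN1 (v : R) : sigmoid_loss v (-1) = 1 - sigmoid_loss v 1.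
Proof.
rewrite /sigmoid_loss mulr1 mulrN1 expRN.
have ev0 := expR_gt0 v.
have ev1 : 1 + expR v != 0 by rewrite lt0r_neq0 // addr_gt0.
have evV1 : 1 + (expR v)^-1 != 0 by rewrite lt0r_neq0 // addr_gt0 ?invr_gt0.
by field; rewrite ?ev1 ?evV1 lt0r_neq0.
Qed.

Lemma range_sigmoid_loss1 : range (fun v : R => sigmoid_loss v 1) = `]0, 1[%classic.
Proof.
apply/seteqP; split.
  move=> _ [v _ <-]; rewrite /= in_itv /= /sigmoid_loss mulr1.
  have ev0 := expR_gt0 v.
  have den0 : 0 < 1 + expR v by rewrite addr_gt0.
  rewrite divr_gt0 //= ltr_pdivrMr // mul1r ltrDl //.
move=> t; rewrite /= in_itv /= => /andP[t0 t1]; exists (ln (t^-1 - 1)) => //.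
rewrite /sigmoid_loss mulr1 lnK; last by rewrite posrE subr_gt0 invf_gt1.
by rewrite addrC subrK div1r invrK.
Qed.

Lemma R_uPUE d (wp wu : R) (P' U' : {fset 'rV[R]_d}) (v : R) :
  R_uPU wp wu P' U' v = (1 - sigmoid_loss v 1) * (#|` U'|%:R * wu - #|` P'|%:R * wp)
                        + sigmoid_loss v 1 * (#|` P'|%:R * wp).
Proof.
rewrite /R_uPU sigmoid_lossN1 !big_const_seq !count_predT !iter_addr_0.
ring.
Qed.

End SigmoidLoss.

Local Open Scope fset_scope.

Theorem proposition5 (R : realType) (d : nat) (P U P' U' : {fset 'rV[R]_d})
  (pi : R) (hpi0 : 0 < pi) (hpi1 : pi < 1)
  (hP' : P' `<=` P) (hU' : U' `<=` U) (hne : (P' != fset0) || (U' != fset0)) :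
  let np := #|` P| in let nu := #|` U| in
  let wp := pi / np%:R in let wu := 1 / nu%:R in
  let Wp := (#|` P'|)%:R * wp in
  let Wn := (#|` U'|)%:R * wu - (#|` P'|)%:R * wp in
  inf [set R_uPU wp wu P' U' v | v in [set: R]] = Num.min Wp Wn.
Proof.
move=> np nu wp wu Wp Wn.
have -> : [set R_uPU wp wu P' U' v | v in [set: R]] = open_segment Wn Wp.
  rewrite /open_segment -range_sigmoid_loss1 image_comp.
  by apply: eq_imagel => v _; rewrite R_uPUE.
by rewrite inf_open_segment minC.
Qed.
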